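(* Let $Y_1,Y_2,\ldots$ be i.i.d. Bernoulli$(1/2)$ and let $(Z^k)_k$ be generated by the bit-drop scheme described in the context, independently of $(Y_i)$; let $L^a_n(k)$ be the length of a longest common subsequence of $Z^k$ and $Y_1\ldots Y_n$. There is a constant $c>0$ such that for every $n$ and every $\nu<0.5$ with $\nu n$ a nonnegative integer, $$P\big(L^a_n(\nu n)=\nu n\big)\geq 1-e^{-c(0.5-\nu)^2n}.$$
   Context: Bit-drop scheme: let $V_1,V_2,\ldots$ be i.i.d. Bernoulli$(1/2)$ and let $T_3,T_4,\ldots$ be independent, independent of $(V_k)$, with $T_{k+1}$ uniform on $\{2,\ldots,k\}$. Set $Z^2:=V_1V_2$ and, given $Z^k=Z^k_1\ldots Z^k_k$, define $Z^{k+1}_j:=Z^k_j$ for $j<T_{k+1}$, $Z^{k+1}_{T_{k+1}}:=V_{k+1}$, $Z^{k+1}_j:=Z^k_{j-1}$ for $T_{k+1}<j\le k+1$. Convention: $Z^0$ empty, $Z^1:=V_1$. *)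

From HB Require Import structures.
From mathcomp Require Import all_boot all_order all_algebra.
From mathcomp Require Import reals sequences exp.
Set Implicit Arguments. Unset Strict Implicit. Unset Printing Implicit Defensive.
Import Order.TTheory GRing.Theory Num.Theory.
Local Open Scope ring_scope.

(* Bit-drop scheme, deterministic part: given the bits V (V i = V_i, i >= 1)
   and the insertion positions T (T i = T_i, i >= 3), Z k = Z^k. *)
Fixpoint Zbits (V : nat -> bool) (T : nat -> nat) (k : nat) : seq bool :=
  match k with
  | 0 => [::]
  | k'.+1 =>
      let z := Zbits V T k' in
      if (k' < 2)%N then rcons z (V k)
      else take (T k).-1 z ++ V k :: drop (T k).-1 z
  end.

Definition lcs_len (a b : seq bool) : nat :=
  \max_(m : (size a).-tuple bool | subseq (mask m a) b) size (mask m a).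

(* Finite sample space for (V_1..V_k, T_1..T_k, Y_1..Y_n).  Entry j (0-based)
   of the tuples stores the variable with index j+1.  T_1, T_2 are unused
   (fixed to 0); T_{j+1} ranges over {2,...,j} for j >= 2. *)
Definition Omega (k n : nat) : finType :=
  (k.-tuple bool * k.-tuple 'I_k.+1 * n.-tuple bool)%type.

Definition validT (k : nat) (t : k.-tuple 'I_k.+1) : bool :=
  [forall j : 'I_k, if (2 <= j)%N then (2 <= tnth t j <= j)%N
                    else (nat_of_ord (tnth t j) == 0)%N].

Definition Vfun k (v : k.-tuple bool) (i : nat) : bool := nth false v i.-1.
Definition Tfun k (t : k.-tuple 'I_k.+1) (i : nat) : nat :=
  nat_of_ord (nth ord0 t i.-1).

(* Uniform (product) probability on the admissible outcomes: since all the
   variables are independent and uniform on finite sets, their joint law is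
   uniform on the product of these sets. *)
Definition admissible k n (w : Omega k n) : bool := validT w.1.2.

Definition unif_prob (R : realType) (T : finType) (S A : pred T) : R :=
  (#|[pred w | S w && A w]|%:R) / (#|[pred w | S w]|%:R).

Definition Lan k n (w : Omega k n) : nat :=
  lcs_len (Zbits (Vfun w.1.1) (Tfun w.1.2) k) w.2.

Definition prob_L_full (R : realType) (k n : nat) : R :=
  unif_prob R (@admissible k n) (fun w => Lan w == k).

From HB Require Import structures.
From mathcomp Require Import all_boot all_order all_algebra.
From mathcomp Require Import reals sequences exp.
From mathcomp Require Import ring lra.
Set Implicit Arguments. Unset Strict Implicit. Unset Printing Implicit Defensive.
Import Order.TTheory GRing.Theory Num.Theory.

(* The word Z^k has length k, so L^a_n(k) = k says exactly that Z^k is a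
   subsequence of Y = Y_1...Y_n.  For a fixed word z, the greedy embedding of z
   into a uniform Y advances at each position of Y independently with
   probability 1/2, so z fails to embed with probability P(Bin(n, 1/2) < |z|).
   Hence the event has probability 1 - P(Bin(n, 1/2) < k) whatever the law of
   Z^k, and an exponential-moment (Chernoff) bound controls this binomial tail. *)

Lemma size_Zbits V T k : size (Zbits V T k) = k.
Proof.
elim: k => //= k IHk; case: ifP => _; first by rewrite size_rcons IHk.
by rewrite size_cat /= addnS -size_cat cat_take_drop IHk.
Qed.

Lemma lcs_len_eq_size (a b : seq bool) : (lcs_len a b == size a) = subseq a b.
Proof.
apply/eqP/idP => [|sub_ab]; last first.
  apply/eqP; rewrite eqn_leq; apply/andP; split.
    by apply/bigmax_leqP => m _; apply/size_subseq/mask_subseq.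
  have := @leq_bigmax_cond _ (fun m : (size a).-tuple bool => subseq (mask m a) b)
            (fun m => size (mask m a)) (nseq_tuple (size a) true).
  by rewrite /= mask_true //; apply.
have [m sub_mb ->] : {m | m \in [pred m : (size a).-tuple bool | subseq (mask m a) b]
                        & lcs_len a b = size (mask m a)}.
  apply: eq_bigmax_cond; apply/card_gt0P; exists (nseq_tuple (size a) false).
  by rewrite inE /= mask_false sub0seq.
move=> /eqP; rewrite (size_subseq_leqif (mask_subseq m a)) => /eqP mask_eq.
by rewrite -mask_eq.
Qed.

Lemma big_tuple_cons (R : Type) (idx : R) (op : Monoid.com_law idx)
    (T : finType) n (F : n.+1.-tuple T -> R) :
  \big[op/idx]_(y : n.+1.-tuple T) F y =
  \big[op/idx]_(b : T) \big[op/idx]_(y : n.-tuple T) F [tuple of b :: y].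
Proof.
rewrite pair_big (reindex (fun p : T * n.-tuple T => [tuple of p.1 :: p.2])) /=.
  by apply: eq_bigr => -[b y].
exists (fun t : n.+1.-tuple T => (thead t, [tuple of behead t])) => [[b y] _|t _].
  by congr pair; apply: val_inj.
by apply: val_inj; case: t => -[].
Qed.

Lemma sum_binS n m :
  \sum_(i < m.+1) 'C(n.+1, i) = \sum_(i < m) 'C(n, i) + \sum_(i < m.+1) 'C(n, i).
Proof.
rewrite big_ord_recl [in RHS]big_ord_recl /= !bin0 addnCA -big_split /=.
by congr (_ + _); apply: eq_bigr => i _; rewrite binS addnC.
Qed.

Lemma card_nsubseq n (z : seq bool) :
  #|[pred y : n.-tuple bool | ~~ subseq z y]| = \sum_(i < size z) 'C(n, i).
Proof.
rewrite -sum1_card big_mkcond /=.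
elim: n z => [|n IHn] [|a z] /=.
- by rewrite big_ord0 big1 // => y _; rewrite (tuple0 y).
- rewrite big_ord_recl [X in _ + X]big1 // (eq_bigr (fun _ => 1)) => [|y _].
    by rewrite sum1_card card_tuple.
  by rewrite (tuple0 y).
- by rewrite big_ord0 big1 // => y _; rewrite inE sub0seq.
rewrite sum_binS -(IHn z) -(IHn (a :: z)) big_tuple_cons big_bool /=.
by case: a; [|rewrite addnC]; congr (_ + _); apply: eq_bigr.
Qed.

Lemma card_subseq_add_binomial_tail n (z : seq bool) :
  #|[pred y : n.-tuple bool | subseq z y]| + \sum_(i < size z) 'C(n, i) = 2 ^ n.
Proof.
by rewrite -card_nsubseq -[2]card_bool -card_tuple -(cardC [pred y : n.-tuple bool | subseq z y]).
Qed.

Lemma exists_validT k : exists t : k.-tuple 'I_k.+1, validT t.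
Proof.
exists [tuple inord (if (2 <= j)%N then nat_of_ord j else 0%N) | j < k].
apply/forallP => j; rewrite tnth_mktuple.
by case: ifP => j_ge2; rewrite inordK ?j_ge2 ?leqnn // ltnS ltnW.
Qed.

Local Open Scope ring_scope.

Lemma card_pairs_fibres (A B : finType) (S : pred A) (E : A -> pred B) (N : nat) :
  (forall a, S a -> #|E a| = N) ->
  #|[pred w : A * B | S w.1 && E w.1 w.2]| = (#|S| * N)%N.
Proof.
move=> cardE; rewrite -sum_nat_const -[LHS]sum1_card.
rewrite (eq_bigr (fun a => \sum_(b in E a) 1)%N) => [|a Sa]; last by rewrite sum1_card cardE.
by rewrite pair_big_dep.
Qed.

Lemma unif_prob_fibres (R : realType) (A B : finType) (S : pred A) (E : A -> pred B)
    (N : nat) (a0 : A) :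
  S a0 -> (forall a, S a -> #|E a| = N) ->
  unif_prob R (fun w : A * B => S w.1) (fun w => E w.1 w.2) = N%:R / #|B|%:R.
Proof.
move=> Sa0 cardE; rewrite /unif_prob (card_pairs_fibres cardE).
rewrite (eq_card (B := [pred w : A * B | S w.1 && predT w.2])) => [|w]; last first.
  by rewrite !inE andbT.
rewrite (@card_pairs_fibres _ _ S (fun _ => predT) #|B|) => [|a _]; last exact: eq_card.
have S_gt0 : (0 < #|S|)%N by apply/card_gt0P; exists a0.
by rewrite !natrM -mulf_div divff ?mul1r // pnatr_eq0 -lt0n.
Qed.

Lemma prob_L_full_binomial_tail (R : realType) k n :
  prob_L_full R k n = 1 - (\sum_(i < k) 'C(n, i))%:R / 2 ^+ n.
Proof.
set tail := (\sum_(i < k) 'C(n, i))%N.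
have card_super (z : seq bool) : size z = k ->
    #|[pred y : n.-tuple bool | lcs_len z y == k]| = (2 ^ n - tail)%N.
  move=> size_z; rewrite /tail -size_z -(card_subseq_add_binomial_tail n z) addnK.
  by apply: eq_card => y; rewrite !inE lcs_len_eq_size.
have [t0 valid_t0] := exists_validT k.
have -> : prob_L_full R k n = (2 ^ n - tail)%N%:R / #|{: n.-tuple bool}|%:R.
  apply: (@unif_prob_fibres R _ _ (fun p => validT p.2)
    (fun p => [pred y : n.-tuple bool | lcs_len (Zbits (Vfun p.1) (Tfun p.2) k) y == k])
    _ (nseq_tuple k false, t0)) => //.
  by move=> p _; apply: card_super; rewrite size_Zbits.
have tail_le : (tail <= 2 ^ n)%N.
  by rewrite -(card_subseq_add_binomial_tail n (nseq k false)) size_nseq leq_addl.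
by rewrite card_tuple card_bool natrB // mulrBl natrX divff // expf_neq0 // pnatr_eq0.
Qed.

Lemma binomial_tail_mul_exp_le (R : numDomainType) n k (x : R) :
  0 <= x <= 1 -> (k <= n)%N -> (\sum_(i < k) 'C(n, i))%:R * x ^+ k <= (x + 1) ^+ n.
Proof.
move=> /andP[x_ge0 x_le1] k_le_n; rewrite exprD1n natr_sum mulr_suml.
apply: (@le_trans _ _ (\sum_(i < k) x ^+ i *+ 'C(n, i))).
  apply: ler_sum => i _; rewrite mulr_natl ler_wMn2r //.
  exact: ler_wiXn2l (ltnW (ltn_ord i)).
rewrite (big_ord_widen n.+1 (fun i => x ^+ i *+ 'C(n, i))) ?leqW // [leLHS]big_mkcond.
by apply: ler_sum => i _; case: ifP => // _; rewrite mulrn_wge0 ?exprn_ge0.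
Qed.

Lemma ge1_mul_subr_expR (R : realType) (t : R) :
  0 <= t <= 1 / 4 -> 1 <= (1 - t) * expR (t + 2 * t ^+ 2).
Proof.
move=> /andP[t_ge0 t_le].
set y := t + 2 * t ^+ 2.
have y_ge0 : 0 <= y by rewrite /y; nra.
have poly_ge1 : 1 <= (1 - t) * (1 + y / 2) ^+ 2.
  have t3_le_t : t ^+ 3 <= t by rewrite -[leRHS]expr1 ler_wiXn2l //; lra.
  have -> : (1 - t) * (1 + y / 2) ^+ 2 = 1 + t ^+ 2 * (5 / 4 - 5 / 4 * t - t ^+ 3).
    by rewrite /y; field.
  by rewrite lerDl mulr_ge0 ?sqr_ge0 //; lra.
apply: (le_trans poly_ge1); rewrite ler_wpM2l ?subr_ge0 //; first lra.
(* [1 + y / 2 <= expR (y / 2)] reduces the claim to the polynomial bound above. *)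
have -> : expR y = expR (y / 2) ^+ 2.
  by rewrite -expRM_natl mulrC divfK // pnatr_eq0.
by apply: lerXn2r; rewrite ?nnegrE ?expR_ge0 ?expR_ge1Dx //; lra.
Qed.

Lemma binomial_tail_le_expR (R : realType) n k (t : R) :
  0 <= t <= 1 / 4 -> (k <= n)%N ->
  (\sum_(i < k) 'C(n, i))%:R / 2 ^+ n <= expR (k%:R * (t + 2 * t ^+ 2) - n%:R * (t / 2)).
Proof.
move=> /andP[t_ge0 t_le] k_le_n.
set S := (\sum_(i < k) 'C(n, i))%:R; set y := t + 2 * t ^+ 2.
have inv_pow2_ge0 : 0 <= (2 ^+ n : R)^-1 by rewrite invr_ge0 exprn_ge0.
have compensate : 1 <= (1 - t) ^+ k * expR (k%:R * y).
  by rewrite expRM_natl -exprMn exprn_ege1 // ge1_mul_subr_expR ?t_ge0.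
have markov : S * (1 - t) ^+ k <= (1 - t + 1) ^+ n.
  by apply: binomial_tail_mul_exp_le => //; apply/andP; split; lra.
have half_le : ((1 - t + 1) / 2) ^+ n <= expR (- (t / 2)) ^+ n.
  by apply: lerXn2r; rewrite ?nnegrE ?expR_ge0 //; [lra | apply: le_trans (expR_ge1Dx _); lra].
rewrite expRD -mulrN [expR (n%:R * _)]expRM_natl [leRHS]mulrC.
apply: (@le_trans _ _ (S * (1 - t) ^+ k / 2 ^+ n * expR (k%:R * y))).
  have -> : S * (1 - t) ^+ k / 2 ^+ n * expR (k%:R * y) =
            S / 2 ^+ n * ((1 - t) ^+ k * expR (k%:R * y)) by ring.
  exact: ler_peMr (mulr_ge0 (ler0n _ _) inv_pow2_ge0) compensate.
apply: ler_wpM2r; first exact: expR_ge0.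
apply: le_trans half_le; rewrite expr_div_n.
by apply: ler_wpM2r markov.
Qed.

Lemma binomial_tail_chernoff (R : realType) n k (nu : R) :
  nu < 1 / 2 -> nu * n%:R = k%:R ->
  (\sum_(i < k) 'C(n, i))%:R / 2 ^+ n <= expR (- (1 / 4 * (1 / 2 - nu) ^+ 2 * n%:R)).
Proof.
move=> nu_lt k_eq.
have [n0 | n_gt0] := posnP n.
  move: k_eq; rewrite n0 mulr0 => /esym/eqP; rewrite pnatr_eq0 => /eqP->.
  by rewrite big_ord0 mul0r expR_ge0.
have nR_gt0 : 0 < n%:R :> R by rewrite ltr0n.
have nu_ge0 : 0 <= nu by rewrite -(pmulr_lge0 _ nR_gt0) k_eq ler0n.
have k_le_n : (k <= n)%N by rewrite -(ler_nat R) -k_eq; nra.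
set e := 1 / 2 - nu.
have e_gt0 : 0 < e by rewrite /e; lra.
have nu_eq : nu = 1 / 2 - e by rewrite /e; lra.
(* with t = e / 2 the exponent is -(e^2 / 4 + e^3 / 2) n *)
apply: (le_trans (@binomial_tail_le_expR R n k (e / 2) _ k_le_n)).
  by apply/andP; split; rewrite /e; lra.
rewrite ler_expR -k_eq nu_eq.
have : 0 <= e ^+ 3 * n%:R by rewrite mulr_ge0 ?exprn_ge0 ?ltW.
nra.
Qed.

Theorem lemma14 (R : realType) :
  exists c : R, 0 < c /\
    forall (n k : nat) (nu : R),
      nu < 1 / 2 -> nu * n%:R = k%:R ->
      prob_L_full R k n >= 1 - expR (- (c * (1 / 2 - nu) ^+ 2 * n%:R)).
Proof.
exists (1 / 4); split; first lra.
move=> n k nu nu_lt k_eq.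
by rewrite prob_L_full_binomial_tail lerD2l lerN2 binomial_tail_chernoff.
Qed.
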